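(* Let $n\in\mathbb{N}\cup\{0\}$, $A_1,\dots,A_n\in\mathscr{Q}$ and $\mathcal{A}=\{A_1,\dots,A_n\}$. An option set $S\in\mathscr{Q}$ belongs to $\mathrm{Ex}(\mathcal{A})$ if and only if either $S\cap\mathscr{V}_{>0}\neq\emptyset$, or $n\neq0$ and for every $\mathbf{u}\in\times_{j=1}^nA_j$ there exist some $s\in S\cup\{0\}$ and some $\boldsymbol\lambda\in\mathbb{R}^{n,+}$ with $\boldsymbol\lambda\mathbf{u}\le s$.
   Context: Let $\mathcal{X}$ be a nonempty set and let $\mathscr{V}$ be the real vector space of all functions $u:\mathcal{X}\to\mathbb{R}$ (options), with pointwise operations. For $u,v\in\mathscr{V}$, $u\le v$ iff $u(x)\le v(x)$ for all $x\in\mathcal{X}$, and $u<v$ iff $u\le v$ and $u\neq v$. Let $\mathscr{V}_{>0}=\{u\in\mathscr{V}:0<u\}$ and $\mathscr{V}^s_{>0}=\{\{u\}:u\in\mathscr{V}_{>0}\}$. Let $\mathscr{Q}$ be the set of all finite subsets of $\mathscr{V}$ (including $\emptyset$). For a positive integer $n$, $\mathbb{R}^{n,+}=\{\boldsymbol\lambda\in\mathbb{R}^n:\lambda_j\ge0\ \forall j,\ \sum_j\lambda_j>0\}$, and for $\boldsymbol\lambda\in\mathbb{R}^n$, $\mathbf u=(u_1,\dots,u_n)\in\mathscr{V}^n$, $\boldsymbol\lambda\mathbf u=\sum_{j=1}^n\lambda_ju_j$. A set of desirable option sets is any $K\subseteq\mathscr{Q}$. It is coherent if for all $A,B\in K$: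 (K0) $A\setminus\{0\}\in K$; (K1) $\{0\}\notin K$; (K2) $\mathscr{V}^s_{>0}\subseteq K$; (K3) $\{\boldsymbol\lambda(\mathbf u)\mathbf u:\mathbf u\in A\times B\}\in K$ for every map $\boldsymbol\lambda:A\times B\to\mathbb{R}^{2,+}$; (K4) $A\cup Q\in K$ for all $Q\in\mathscr{Q}$. $\bar{\mathbf K}$ denotes the set of coherent sets of desirable option sets. An assessment is any subset $\mathcal{A}\subseteq\mathscr{Q}$. Let $\bar{\mathbf K}(\mathcal A)=\{K\in\bar{\mathbf K}:\mathcal A\subseteq K\}$ and $\mathrm{Ex}(\mathcal A)=\bigcap\bar{\mathbf K}(\mathcal A)$, with the convention $\bigcap\emptyset=\mathscr{Q}$. *)

From HB Require Import structures.
From mathcomp Require Import all_boot all_order all_algebra.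
From mathcomp Require Import boolp classical_sets functions cardinality reals.
Set Implicit Arguments. Unset Strict Implicit. Unset Printing Implicit Defensive.
Import Order.TTheory GRing.Theory Num.Theory.
Local Open Scope classical_set_scope.
Local Open Scope ring_scope.

Section Defs.
Variables (X : Type) (R : realType).

Definition opt0 : X -> R := fun _ => 0.
Definition opt_le (u v : X -> R) : Prop := forall x, u x <= v x.
Definition opt_lt (u v : X -> R) : Prop := opt_le u v /\ u <> v.
Definition Vpos : set (X -> R) := [set u | opt_lt opt0 u].
Definition Qset : set (set (X -> R)) := [set A | finite_set A].

Definition R2plus (p : R * R) : Prop := 0 <= p.1 /\ 0 <= p.2 /\ 0 < p.1 + p.2.
Definition Rnplus (n : nat) (lam : 'I_n -> R) : Prop :=
  (forall j, 0 <= lam j) /\ 0 < \sum_(j < n) lam j.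
Definition lincomb (n : nat) (lam : 'I_n -> R) (u : 'I_n -> X -> R) : X -> R :=
  fun x => \sum_(j < n) lam j * u j x.

(* coherent sets of desirable option sets; a map lambda : A x B -> R^{2,+}
   is represented by a total function constrained on A x B. *)
Definition coherent (K : set (set (X -> R))) : Prop :=
  K `<=` Qset /\
  (* K0 *) (forall A, K A -> K (A `\ opt0)) /\
  (* K1 *) ~ K [set opt0] /\
  (* K2 *) (forall u, Vpos u -> K [set u]) /\
  (* K3 *) (forall A B, K A -> K B ->
     forall lam : (X -> R) -> (X -> R) -> R * R,
       (forall u v, A u -> B v -> R2plus (lam u v)) ->
       K [set w | exists u v, A u /\ B v /\
                  w = (fun x => (lam u v).1 * u x + (lam u v).2 * v x)]) /\
  (* K4 *) (forall A Q, K A -> Qset Q -> K (A `|` Q)).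

(* Ex(AA) = intersection of all coherent K containing AA, with the
   convention that the empty intersection is Q. *)
Definition Ex (AA : set (set (X -> R))) : set (set (X -> R)) :=
  [set S | Qset S /\ forall K, coherent K -> AA `<=` K -> K S].

End Defs.

(* Necessity.  The finite option sets satisfying the criterion form a
   coherent set of desirable option sets containing every A_j
   ([criterion_coherent]); K3 is the only delicate axiom and is handled by a
   case analysis on positive options ([criterion_K3]).  If {0} itself satisfies the criterion
   (so that K1 fails) the criterion holds for every S anyway.

   Sufficiency.  Fix a coherent K containing every A_j.  Axiom K3 lets one
   replace a single element of a member of K by combinations with the
   elements of another member ([K_substitute], [K_absorb]); eliminating
   elements one at a time ([K_refine]) and inducting on n, K contains a set
   of options all dominated by S ∪ {0} ([K_combinations]).  Adding positive
   differences through K3 then puts S ∪ {0} in K ([K_dominated]), and K0,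
   K4 give S in K. *)
From HB Require Import structures.
From mathcomp Require Import all_boot all_order all_algebra.
From mathcomp Require Import boolp classical_sets functions cardinality reals.
From mathcomp Require Import lra.
Set Implicit Arguments. Unset Strict Implicit. Unset Printing Implicit Defensive.
Import Order.TTheory GRing.Theory Num.Theory.
Local Open Scope classical_set_scope.
Local Open Scope ring_scope.

Section Options.
Variables (X : Type) (R : realType).
Implicit Types (w : X -> R) (a b : R).
Local Notation Vpos := (@Vpos X R).
Local Notation opt0 := (@opt0 X R).

Lemma Vpos_witness w : Vpos w -> exists x, 0 < w x.
Proof.
move=> [w_ge0 w_neq0]; apply: contrapT => no_x; apply: w_neq0.
apply: funext => x; have := w_ge0 x; rewrite /opt0 le0r => /orP[/eqP -> //|wx].
by exfalso; apply: no_x; exists x.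
Qed.

Lemma Vpos_intro w x0 : (forall x, 0 <= w x) -> 0 < w x0 -> Vpos w.
Proof. by move=> w_ge0 wx0; split=> // w0; move: wx0; rewrite -w0 /opt0 ltxx. Qed.

Lemma Vpos_comb a b p q : R2plus (a, b) -> Vpos p -> Vpos q ->
  Vpos (fun x => a * p x + b * q x).
Proof.
move=> [/= a_ge0 [b_ge0 ab_gt0]] Pp Pq.
have [[p_ge0 _] [x0 px0]] := (Pp, Vpos_witness Pp).
have [[q_ge0 _] [x1 qx1]] := (Pq, Vpos_witness Pq).
have comb_ge0 x : 0 <= a * p x + b * q x.
  by apply: addr_ge0; apply: mulr_ge0; [|exact: p_ge0| |exact: q_ge0].
move: a_ge0; rewrite le0r => /orP[/eqP a0|a_gt0].
  apply: (Vpos_intro (x0 := x1)) => //; rewrite a0 mul0r add0r.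
  by apply: mulr_gt0 => //; rewrite a0 add0r in ab_gt0.
apply: (Vpos_intro (x0 := x0)) => //; apply: ltr_pwDl; first exact: mulr_gt0.
by apply: mulr_ge0 => //; exact: q_ge0.
Qed.

Lemma lincomb_comb n (m1 m2 : 'I_n -> R) (u : 'I_n -> X -> R) a b x :
  lincomb (fun j => a * m1 j + b * m2 j) u x =
  a * lincomb m1 u x + b * lincomb m2 u x.
Proof.
rewrite /lincomb !mulr_sumr -big_split /=; apply: eq_bigr => j _.
by rewrite mulrDl !mulrA.
Qed.

Lemma Rnplus_comb n (m1 m2 : 'I_n -> R) a b :
  R2plus (a, b) -> Rnplus m1 -> Rnplus m2 ->
  Rnplus (fun j => a * m1 j + b * m2 j).
Proof.
move=> [/= a_ge0 [b_ge0 ab_gt0]] [m1_ge0 m1_gt0] [m2_ge0 m2_gt0]; split.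
  by move=> j; apply: addr_ge0; apply: mulr_ge0.
rewrite big_split /= -!mulr_sumr.
move: a_ge0; rewrite le0r => /orP[/eqP a0|a_gt0].
  by rewrite a0 mul0r add0r; apply: mulr_gt0 => //; rewrite a0 add0r in ab_gt0.
by apply: ltr_pwDl; [exact: mulr_gt0 | apply: mulr_ge0 => //; exact: ltW].
Qed.

End Options.

Section Criterion.
Variables (X : Type) (R : realType) (n : nat) (A : 'I_n -> set (X -> R)).
Local Notation Vpos := (@Vpos X R).
Local Notation opt0 := (@opt0 X R).
Implicit Types (S T : set (X -> R)).

Definition ex_criterion S : Prop :=
  (S `&` Vpos) !=set0 \/
  (n <> 0%N /\
   forall u : 'I_n -> X -> R, (forall j, A j (u j)) ->
     exists s, (S `|` [set opt0]) s /\
     exists lam : 'I_n -> R, Rnplus lam /\ opt_le (lincomb lam u) s).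

Lemma criterion_mono S T : S `<=` T -> ex_criterion S -> ex_criterion T.
Proof.
move=> ST [[w [Sw Pw]]|[n0 dom]]; first by left; exists w; split=> //; exact: ST.
right; split=> // u Au; have [s [Ss lam_s]] := dom u Au; exists s; split=> //.
by case: Ss => [/ST|]; [left|right].
Qed.

(* Since 0 is neither positive nor needed as a dominating option, adding 0
   to S does not change the criterion. *)
Lemma criterion_setU0 S : ex_criterion (S `|` [set opt0]) -> ex_criterion S.
Proof.
move=> [[w [[Sw|->] Pw]]|[n0 dom]]; first by left; exists w.
  by case: Pw.
right; split=> // u Au; have [s [Ss lam_s]] := dom u Au; exists s; split=> //.
by case: Ss => [|->]; [|right].
Qed.

Lemma criterion_setD0 S : ex_criterion S -> ex_criterion (S `\ opt0).
Proof.
move=> crit_S; apply: criterion_setU0; apply: criterion_mono crit_S.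
by move=> w Sw; have [->|w0] := pselect (w = opt0); [right|left].
Qed.

(* Each A_j satisfies the criterion, with lambda the j-th unit vector. *)
Lemma criterion_generator j : ex_criterion (A j).
Proof.
right; split; first by case: j => k k_lt_n n0; rewrite n0 in k_lt_n.
move=> u Au; exists (u j); split; first by left.
exists (fun i => if i == j then 1 else 0); split.
  split; first by move=> i; case: eqP.
  by rewrite (bigD1 j) //= eqxx big1 ?addr0 // => i /negPf ->.
move=> x; rewrite /lincomb (bigD1 j) //= eqxx mul1r big1 ?addr0 // => i /negPf ->.
by rewrite mul0r.
Qed.

(* K3 when one side D has no positive option while the other contains a
   positive option p: if C contains every combination of p with an option
   of D, then C satisfies the criterion. *)
Lemma criterion_K3_mixed C D p (g : (X -> R) -> R * R) :
  Vpos p -> ex_criterion D -> ~ ((D `&` Vpos) !=set0) ->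
  (forall d, D d -> R2plus (g d)) ->
  (forall d, D d -> C (fun x => (g d).1 * p x + (g d).2 * d x)) ->
  ex_criterion C.
Proof.
move=> Pp [//|[n0 dom]] _ g_R2 DC.
have p_ge0 : forall x, 0 <= p x by case: Pp.
have [[d [Dd g0]]|g_pos] := pselect (exists d, D d /\ (g d).2 = 0).
  have [x0 px0] := Vpos_witness Pp.
  have [g1_ge0 [_ g_gt0]] := g_R2 d Dd; rewrite g0 addr0 in g_gt0.
  left; exists (fun x => (g d).1 * p x + (g d).2 * d x); split; first exact: DC.
  apply: (Vpos_intro (x0 := x0)) => [x|]; rewrite g0 mul0r addr0.
    exact: mulr_ge0.
  exact: mulr_gt0.
right; split=> // u Au.
have [s [[Ds|s0] [mu [mu_R le_mu]]]] := dom u Au; last first.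
  by exists s; split; [right | exists mu].
have [g1_ge0 [g2_ge0 _]] := g_R2 s Ds.
have g2_gt0 : 0 < (g s).2.
  by rewrite lt0r g2_ge0 andbT; apply/eqP => g0; apply: g_pos; exists s.
exists (fun x => (g s).1 * p x + (g s).2 * s x); split; first by left; exact: DC.
exists (fun j => 0 * mu j + (g s).2 * mu j); split.
  by apply: Rnplus_comb => //; rewrite /R2plus /= add0r; split; [|split]; lra.
move=> x; rewrite lincomb_comb mul0r.
by apply: lerD; [exact: mulr_ge0 | exact: ler_wpM2l].
Qed.

Lemma criterion_K3 S T (lam : (X -> R) -> (X -> R) -> R * R) :
  ex_criterion S -> ex_criterion T ->
  (forall u v, S u -> T v -> R2plus (lam u v)) ->
  ex_criterion [set w | exists u v, S u /\ T v /\
                 w = (fun x => (lam u v).1 * u x + (lam u v).2 * v x)].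
Proof.
move=> crit_S crit_T lam_R2.
have [[p [Sp Pp]]|noS] := pselect ((S `&` Vpos) !=set0);
have [[q [Tq Pq]]|noT] := pselect ((T `&` Vpos) !=set0).
- left; exists (fun x => (lam p q).1 * p x + (lam p q).2 * q x).
  by split; [exists p, q | apply: Vpos_comb => //; exact: lam_R2].
- apply: (criterion_K3_mixed (D := T) (p := p) (g := lam p)) => //.
    by move=> d Td; exact: lam_R2.
  by move=> d Td; exists p, d.
- apply: (criterion_K3_mixed (D := S) (p := q)
            (g := fun d => ((lam d q).2, (lam d q).1))) => //.
    move=> d Sd; have [? [? ?]] := lam_R2 d q Sd Tq.
    by split=> //; split=> //=; rewrite addrC.
  move=> d Sd; exists d, q; split=> //; split=> //.
  by apply: funext => x /=; exact: addrC.
case: crit_S => [//|[n0 domS]]; case: crit_T => [//|[_ domT]].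
right; split=> // u Au.
have [s [[Ss|s0] [m1 [m1_R le1]]]] := domS u Au; last first.
  by exists s; split; [right | exists m1].
have [t [[Tt|t0] [m2 [m2_R le2]]]] := domT u Au; last first.
  by exists t; split; [right | exists m2].
have [l1_ge0 [l2_ge0 _]] := lam_R2 s t Ss Tt.
exists (fun x => (lam s t).1 * s x + (lam s t).2 * t x).
split; first by left; exists s, t.
exists (fun j => (lam s t).1 * m1 j + (lam s t).2 * m2 j); split.
  by apply: Rnplus_comb => //; exact: lam_R2.
by move=> x; rewrite lincomb_comb; apply: lerD; apply: ler_wpM2l.
Qed.

Lemma criterion_coherent :
  ~ ex_criterion [set opt0] -> coherent [set S | Qset S /\ ex_criterion S].
Proof.
move=> crit0; split; first by move=> S [].
split; first by move=> S [fin_S crit_S]; split;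
  [exact: finite_setD | exact: criterion_setD0].
split; first by case.
split; first by move=> u Pu; split; [exact: finite_set1 | left; exists u].
split.
  move=> S T [fin_S crit_S] [fin_T crit_T] lam lam_R2.
  split; last exact: criterion_K3.
  pose comb (uv : (X -> R) * (X -> R)) :=
    fun x => (lam uv.1 uv.2).1 * uv.1 x + (lam uv.1 uv.2).2 * uv.2 x.
  apply: (@sub_finite_set _ _ (comb @` (S `*` T))).
    by move=> w [u [v [Su [Tv ->]]]]; exists (u, v).
  by apply: finite_image; exact: finite_setX.
move=> S Q [fin_S crit_S] fin_Q; split; first by rewrite /Qset /= finite_setU.
by apply: criterion_mono crit_S => w; left.
Qed.

Lemma criterion_necessary S :
  (forall j, Qset (A j)) -> Ex (range A) S -> ex_criterion S.
Proof.
move=> fin_A [_ in_all_K].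
have [crit0|crit0] := pselect (ex_criterion [set opt0]).
  by apply: criterion_setU0; apply: criterion_mono crit0 => w; right.
have [] // := in_all_K _ (criterion_coherent crit0).
by move=> _ [j _ <-]; split; [exact: fin_A | exact: criterion_generator].
Qed.

End Criterion.

Section CoherentSets.
Variables (X : Type) (R : realType) (K : set (set (X -> R))).
Hypothesis cohK : coherent K.
Implicit Types (W T P : set (X -> R)) (v : X -> R).

Lemma K_refine I P :
  P `<=` I ->
  (forall W v, K W -> W `<=` I -> W v -> ~ P v ->
     exists W', K W' /\ W' `<=` (W `\ v) `|` P) ->
  forall W, K W -> finite_set W -> W `<=` I -> exists T, K T /\ T `<=` P.
Proof.
move=> PI trade W KW /finite_seqP[s W_s] WI.
(* induction on a list containing the elements of W outside P *)
have {W_s} : forall w, W w -> ~ P w -> w \in s by move=> w; rewrite W_s.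
elim: s W KW WI => [|a s IH] W KW WI outside_in_s.
  exists W; split=> // w Ww; apply: contrapT => Pw.
  by have := outside_in_s w Ww Pw.
have [[Wa Pa]|keep_a] := pselect (W a /\ ~ P a).
  have [W' [KW' W'_sub]] := trade W a KW WI Wa Pa.
  apply: (IH W') => // [w /W'_sub [[Ww _]|Pw]|w /W'_sub [[Ww wa] Pw|//]].
  + exact: WI.
  + exact: PI.
  + by move: (outside_in_s w Ww Pw); rewrite inE => /orP[/eqP|].
apply: (IH W) => // w Ww Pw; move: (outside_in_s w Ww Pw).
by rewrite inE => /orP[/eqP wa|//]; case: keep_a; rewrite -wa.
Qed.

(* K3 used to replace the single element v of W by combinations of v with
   the elements of B, with weights f b in R^{2,+}. *)
Lemma K_substitute W B v (f : (X -> R) -> R * R) :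
  K W -> K B -> (forall b, B b -> R2plus (f b)) ->
  exists W', K W' /\ W' `<=` (W `\ v) `|`
    [set w | exists b, B b /\ w = (fun x => (f b).1 * v x + (f b).2 * b x)].
Proof.
case: cohK => _ [_ [_ [_ [K3 _]]]] KW KB f_R2.
pose lam (a b : X -> R) := if a == v then f b else ((1 : R), (0 : R)).
eexists; split; first apply: (K3 W B KW KB lam).
  move=> a b Wa Bb; rewrite /lam; case: eqP => _; first exact: f_R2.
  by rewrite /R2plus /=; split; [|split]; lra.
move=> w [a [b [Wa [Bb ->]]]]; rewrite /lam; case: eqP => [->|av].
  by right; exists b.
have -> : (fun x => ((1 : R), (0 : R)).1 * a x + ((1 : R), (0 : R)).2 * b x) = a.
  by apply: funext => x /=; rewrite mul1r mul0r addr0.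
by left.
Qed.

Lemma K_absorb W T v P :
  K W -> K T ->
  (forall t, T t ->
     exists cd, R2plus cd /\ P (fun x => cd.1 * v x + cd.2 * t x)) ->
  exists W', K W' /\ W' `<=` (W `\ v) `|` P.
Proof.
move=> KW KT absorb.
have [f f_spec] : {f : (X -> R) -> R * R & forall t, T t ->
    R2plus (f t) /\ P (fun x => (f t).1 * v x + (f t).2 * t x)}.
  apply: (@choice _ _ (fun t cd => T t ->
    R2plus cd /\ P (fun x => cd.1 * v x + cd.2 * t x))) => t.
  have [/absorb[cd cd_spec]|not_Tt] := pselect (T t).
    by exists cd.
  by exists (0, 0) => /not_Tt.
have [W' [KW' W'_sub]] := K_substitute v KW KT (fun t Tt => (f_spec t Tt).1).
exists W'; split=> // w /W'_sub [Ww|[t [Tt ->]]]; first by left.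
by right; exact: (f_spec t Tt).2.
Qed.

(* A finite S belongs to K as soon as some member of K consists of options
   each dominated by an element of S: trade every t <= s for
   s = t + (s - t), where the positive difference s - t is in K by K2. *)
Lemma K_dominated S T :
  Qset S -> K T -> T `<=` [set t | exists s, S s /\ opt_le t s] -> K S.
Proof.
move=> fin_S KT T_dom; case: (cohK) => KQ [_ [_ [K2 [_ K4]]]].
have [T' [KT' T'S]] : exists T', K T' /\ T' `<=` S.
  apply: (K_refine (I := [set t | exists s, S s /\ opt_le t s]) (P := S)
            _ _ KT (KQ _ KT) T_dom) => [s Ss|W v KW W_dom Wv Sv].
    by exists s; split=> // x; exact: lexx.
  have [s [Ss v_le_s]] := W_dom v Wv.
  apply: (K_absorb (T := [set fun x => s x - v x])) => // [|_ ->].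
    apply: K2; split=> [x|]; first by rewrite /opt0 subr_ge0; exact: v_le_s.
    move=> s_eq_v; apply: Sv; suff -> : v = s by [].
    apply: funext => x; have /eqP := congr1 (fun f => f x) s_eq_v.
    by rewrite /opt0 eq_sym subr_eq0 => /eqP.
  exists (1, 1); split=> /=; first by rewrite /R2plus /=; split; [|split]; lra.
  have -> // : (fun x => 1 * v x + 1 * (s x - v x)) = s.
  by apply: funext => x; rewrite !mul1r addrC subrK.
by rewrite -(setUidr T'S); exact: K4.
Qed.

(* Main induction (on the number m of generators, indexed by nat): if every
   selection u_i in B_i (i < m) has a nonnegative combination with positive
   total weight lying in P, then some member of K is contained in P.  Each
   v in B_m is either absorbed directly (c v in P for some c > 0), or
   combined with a member of K, obtained by induction, whose elements t all
   satisfy c v + t in P for some c >= 0. *)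
Lemma K_combinations m (B : nat -> set (X -> R)) P :
  (forall i, (i < m)%N -> K (B i)) ->
  (forall u : nat -> X -> R, (forall i, (i < m)%N -> B i (u i)) ->
     exists lam : nat -> R, (forall i, 0 <= lam i) /\
       0 < \sum_(i < m) lam i /\ P (fun x => \sum_(i < m) lam i * u i x)) ->
  exists T, K T /\ T `<=` P.
Proof.
case: (cohK) => KQ _; elim: m B P => [|m IH] B P KB comb_P.
  have [lam [_ [+ _]]] := comb_P (fun _ _ => 0) (fun i => ltac:(by [])).
  by rewrite big_ord0 ltxx.
have KBm := KB m (ltnSn m).
apply: (K_refine (I := B m `|` P) (P := P) _ _ KBm (KQ _ KBm))
  => [t Pt|W v KW W_sub Wv notPv|t Bt]; [by right| |by left].
have Bv : B m v by case: (W_sub v Wv).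
have [[c [c_gt0 Pcv]]|no_c] := pselect (exists c, 0 < c /\ P (fun x => c * v x)).
  apply: (K_absorb KW KW) => t _; exists (c, 0); split=> /=.
    by rewrite /R2plus /=; split; [|split]; lra.
  have -> // : (fun x => c * v x + 0 * t x) = (fun x => c * v x).
  by apply: funext => x; rewrite mul0r addr0.
pose Pv := [set t | exists c, 0 <= c /\ P (fun x => c * v x + 1 * t x)].
suff [Tv [KTv TvP]] : exists T, K T /\ T `<=` Pv.
  apply: (K_absorb KW KTv) => t /TvP [c [c_ge0 Pct]]; exists (c, 1).
  by split=> //; rewrite /R2plus /=; split; [|split]; lra.
apply: (IH B Pv (fun i lt_im => KB i (leqW lt_im))) => u' Bu'.
pose u i := if i == m then v else u' i.
have Bu i : (i < m.+1)%N -> B i (u i).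
  rewrite ltnS leq_eqVlt => /orP[/eqP ->|lt_im]; rewrite /u ?eqxx //.
  by rewrite (ltn_eqF lt_im); exact: Bu'.
have [lam [lam_ge0 [lam_gt0 P_lam]]] := comb_P u Bu.
have comb_recr : (fun x => \sum_(i < m.+1) lam i * u i x) =
                 (fun x => lam m * v x + 1 * \sum_(i < m) lam i * u' i x).
  apply: funext => x; rewrite big_ord_recr /= /u eqxx mul1r addrC.
  by congr (_ + _); apply: eq_bigr => i _; rewrite (ltn_eqF (ltn_ord i)).
rewrite comb_recr in P_lam; rewrite big_ord_recr /= in lam_gt0.
have : 0 <= \sum_(i < m) lam i by apply: sumr_ge0.
rewrite le0r => /orP[/eqP sum0|sum_gt0]; last first.
  by exists lam; split=> //; split=> //; exists (lam m).
(* all lam_i with i < m vanish, so lam_m v lies in P: excluded above *)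
case: no_c; exists (lam m); split; first by rewrite sum0 add0r in lam_gt0.
have lam0 := psumr_eq0P (fun (i : 'I_m) _ => lam_ge0 i) sum0.
move: P_lam; congr P; apply: funext => x.
by rewrite big1 ?mulr0 ?addr0 // => i _; rewrite lam0 ?mul0r.
Qed.

Lemma K_combinations_ord n (A : 'I_n -> set (X -> R)) P :
  (forall j, K (A j)) ->
  (forall u : 'I_n -> X -> R, (forall j, A j (u j)) ->
     exists lam : 'I_n -> R, Rnplus lam /\ P (lincomb lam u)) ->
  exists T, K T /\ T `<=` P.
Proof.
move=> KA comb_P; pose B i := oapp A set0 (insub i).
have BE (j : 'I_n) : B j = A j by rewrite /B valK.
apply: (@K_combinations n B) => [i lt_in|u Bu].
  by rewrite -[i]/(val (Ordinal lt_in)) BE.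
have Au (j : 'I_n) : A j (u j) by rewrite -BE; exact: Bu.
have [lam [[lam_ge0 lam_gt0] P_lam]] := comb_P (fun j => u j) Au.
pose lam' i := oapp lam 0 (insub i).
have lamE (j : 'I_n) : lam' j = lam j by rewrite /lam' valK.
exists lam'; split; first by move=> i; rewrite /lam'; case: insub.
split; first by rewrite (eq_bigr lam) // => j _; exact: lamE.
move: P_lam; congr P; apply: funext => x.
by rewrite /lincomb; apply: eq_bigr => j _; rewrite lamE.
Qed.

Lemma criterion_sufficient n (A : 'I_n -> set (X -> R)) S :
  (forall j, K (A j)) -> Qset S -> ex_criterion A S -> K S.
Proof.
case: (cohK) => _ [K0 [_ [K2 [_ K4]]]] KA fin_S.
case=> [[u [Su Pu]]|[_ dom]].
  have uS : [set u] `<=` S by move=> _ ->.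
  by rewrite -(setUidr uS); exact: K4 (K2 _ Pu) fin_S.
pose S0 := S `|` [set @opt0 X R].
have [T [KT T_dom]] : exists T, K T /\ T `<=` [set t | exists s, S0 s /\ opt_le t s].
  apply: K_combinations_ord KA _ => u /dom [s [S0s [lam [lam_R le_s]]]].
  by exists lam; split=> //; exists s.
have KS0 : K S0.
  apply: K_dominated KT T_dom.
  by rewrite /Qset /= finite_setU; split=> //; exact: finite_set1.
have := K4 _ S (K0 _ KS0) fin_S; rewrite setUidr //.
by move=> x [[Sx|x0] x_neq0].
Qed.

End CoherentSets.

Theorem theorem5 (X : Type) (R : realType) (hX : inhabited X) (n : nat)
  (A : 'I_n -> set (X -> R)) (hA : forall j, Qset (A j))
  (S : set (X -> R)) (hS : Qset S) :
  Ex (range A) S <->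
  ((S `&` @Vpos X R) !=set0 \/
   (n <> 0%N /\
    forall u : 'I_n -> X -> R, (forall j, A j (u j)) ->
      exists s, (S `|` [set @opt0 X R]) s /\
      exists lam : 'I_n -> R, Rnplus lam /\ opt_le (lincomb lam u) s)).
Proof.
split; first exact: criterion_necessary.
move=> crit_S; split=> // K cohK A_in_K.
apply: (criterion_sufficient cohK) crit_S => // j.
by apply: A_in_K; exists j.
Qed.
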